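(* Let $U$ be a finite nonempty set, $R$ an equivalence relation on $U$, and $M(R)$ the support matroid induced by $R$. For every $X\subseteq U$, $X$ is not a closed set of $M(R)$ if and only if $X$ is an $R$-rough set.
   Context: For $x\in U$, $RN(x)=\{y\in U\mid xRy\}$; $R_{*}(X)=\{x\in U\mid RN(x)\subseteq X\}$ and $R^{*}(X)=\{x\in U\mid RN(x)\cap X\neq\emptyset\}$. A set $X\subseteq U$ is $R$-precise if $R^{*}(X)=R_{*}(X)$, and $R$-rough otherwise. Let $\mathbf{S}(R)=\{X\subseteq U\mid R^{*}(X)=U\}$. The support matroid $M(R)=(U,\mathbf{I}(R))$ is the matroid on $U$ whose independent sets $\mathbf{I}(R)$ are the subsets of inclusion-minimal members of $\mathbf{S}(R)$. For a matroid $(U,\mathbf{I})$, the rank is $r(X)=\max\{|I|\mid I\subseteq X, I\in\mathbf{I}\}$, the closure is $cl(X)=\{e\in U\mid r(X)=r(X\cup\{e\})\}$, and $X$ is closed if $cl(X)=X$. *)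

(* U is a finite type T (the whole carrier), subsets are {set T}. *)
From mathcomp Require Import all_boot.
Set Implicit Arguments. Unset Strict Implicit. Unset Printing Implicit Defensive.

Section RoughMatroid.
Variables (T : finType) (R : rel T).

Definition RN (x : T) : {set T} := [set y | R x y].
Definition lower_approx (X : {set T}) : {set T} := [set x | RN x \subset X].
Definition upper_approx (X : {set T}) : {set T} := [set x | RN x :&: X != set0].
Definition R_precise (X : {set T}) : bool := upper_approx X == lower_approx X.
Definition R_rough (X : {set T}) : bool := ~~ R_precise X.

Definition SR : {set {set T}} := [set X | upper_approx X == setT].
Definition indep (I : {set T}) : bool :=
  [exists A : {set T}, minset (fun Y => Y \in SR) A && (I \subset A)].
Definition rank (X : {set T}) : nat :=
  \max_(I : {set T} | indep I && (I \subset X)) #|I|.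
Definition closure (X : {set T}) : {set T} :=
  [set e | rank X == rank (e |: X)].
Definition M_closed (X : {set T}) : bool := closure X == X.

End RoughMatroid.

(* For an equivalence relation R, the minimal supports of M(R) are exactly the
   transversals of the partition U/R, so the independent sets are the partial
   transversals and the rank of X counts the classes meeting X.  Adding e to X
   raises the rank iff the class of e misses X, hence cl(X) = R^*(X).  Since
   R_*(X) <= X <= R^*(X) always, X is closed iff it is a union of classes,
   i.e. iff R^*(X) = R_*(X). *)
From Pilot Require Import Defs.
From mathcomp Require Import all_boot.
Set Implicit Arguments. Unset Strict Implicit. Unset Printing Implicit Defensive.

Section EquivalenceSupportMatroid.
Variables (T : finType) (R : rel T).
Hypotheses (Rrefl : reflexive R) (Rsym : symmetric R) (Rtrans : transitive R).
Implicit Types (A B C I X Y : {set T}) (e x : T).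

Definition partial_transversal (B : {set T}) : bool :=
  [forall x in B, forall y in B, R x y ==> (x == y)].

Lemma partial_transversalP B :
  reflect {in B &, forall x y, R x y -> x = y} (partial_transversal B).
Proof.
apply: (iffP forallP) => [PB x y xB yB Rxy | PB x].
  by move: (PB x); rewrite xB => /forallP/(_ y); rewrite yB Rxy => /eqP.
apply/implyP=> xB; apply/forall_inP=> y yB; apply/implyP=> Rxy.
exact/eqP/PB.
Qed.

Lemma partial_transversal0 : partial_transversal set0.
Proof. by apply/partial_transversalP=> x y; rewrite inE. Qed.

Lemma partial_transversalU1 e B :
  partial_transversal B -> {in B, forall a, ~~ R e a} ->
  partial_transversal (e |: B).
Proof.
move=> /partial_transversalP PB eB; apply/partial_transversalP=> x y.
rewrite !inE => /predU1P[-> | xB] /predU1P[-> | yB] Rxy //.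
- by move: (eB y yB); rewrite Rxy.
- by move: (eB x xB); rewrite Rsym Rxy.
- exact: PB.
Qed.

Lemma in_upper_approx X e : (e \in upper_approx R X) = [exists x in X, R e x].
Proof.
rewrite inE; apply/set0Pn/exists_inP=> [[x] | [x xX Rex]].
  by rewrite !inE => /andP[Rex xX]; exists x.
by exists x; rewrite !inE Rex.
Qed.

Lemma minimal_support_partial_transversal A :
  minset (fun Y => Y \in SR R) A -> partial_transversal A.
Proof.
move=> /minsetP[suppA minA]; apply/partial_transversalP=> x y xA yA Rxy.
apply/eqP/negPn/negP=> neq_xy.
have suppAy : A :\ y \in SR R.
  rewrite inE; apply/eqP/setP=> z; rewrite in_upper_approx inE.
  move: suppA; rewrite inE => /eqP/setP/(_ z).
  rewrite in_upper_approx inE => /exists_inP[w wA Rzw].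
  apply/exists_inP; case: (eqVneq w y) => [wy | wNy].
    exists x; first by rewrite !inE neq_xy.
    by rewrite wy in Rzw; apply: Rtrans Rzw _; rewrite Rsym.
  by exists w; rewrite // !inE wNy.
by move/setP: (minA _ suppAy (subD1set A y)) => /(_ y); rewrite !inE eqxx yA.
Qed.

Lemma max_partial_transversal_minimal_support B :
  maxset partial_transversal B -> minset (fun Y => Y \in SR R) B.
Proof.
move=> /maxsetP[PB maxB]; apply/minsetP; split.
  rewrite inE; apply/eqP/setP=> z; rewrite in_upper_approx inE.
  apply: contraT => /exists_inPn zB.
  have zNB : z \notin B by apply/negP => /zB; rewrite Rrefl.
  move/setP: (maxB _ (partial_transversalU1 PB zB) (subsetUr _ _)) => /(_ z).
  by rewrite !inE eqxx (negbTE zNB).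
move=> C; rewrite inE => /eqP/setP suppC CB; apply/eqP; rewrite eqEsubset CB.
apply/subsetP=> b bB; move: (suppC b); rewrite in_upper_approx inE.
case/exists_inP=> c cC Rbc.
by rewrite ((partial_transversalP _ PB) b c bB (subsetP CB c cC) Rbc).
Qed.

Lemma indepE I : indep R I = partial_transversal I.
Proof.
apply/existsP/idP=> [[A /andP[/minimal_support_partial_transversal PA IA]] | PI].
  by apply/partial_transversalP=> x y xI yI; apply: (partial_transversalP _ PA);
    apply: (subsetP IA).
have [B maxB IB] := maxset_exists PI.
by exists B; rewrite IB max_partial_transversal_minimal_support.
Qed.

Lemma rank_witness X :
  exists2 I, partial_transversal I && (I \subset X) & rank R X = #|I|.
Proof.
have : 0 < #|[pred I : {set T} | indep R I && (I \subset X)]|.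
  by apply/card_gt0P; exists set0; rewrite inE indepE partial_transversal0 sub0set.
by case/(eq_bigmax_cond (fun I : {set T} => #|I|)) => I; rewrite inE indepE; exists I.
Qed.

Lemma leq_card_rank I X :
  partial_transversal I -> I \subset X -> #|I| <= rank R X.
Proof. by move=> PI IX; apply: leq_bigmax_cond; rewrite indepE PI. Qed.

Lemma rankS X Y : X \subset Y -> rank R X <= rank R Y.
Proof.
move=> XY; have [I /andP[PI IX] ->] := rank_witness X.
exact: leq_card_rank (subset_trans IX XY).
Qed.

(* A maximal independent subset of e |: X using e can trade e for x. *)
Lemma rank_setU1_related X e x : x \in X -> R e x -> rank R (e |: X) = rank R X.
Proof.
move=> xX Rex; apply/eqP; rewrite eqn_leq andbC rankS ?subsetUr //=.
have [I /andP[PI IeX] ->] := rank_witness (e |: X).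
have sub_eX z : z \in I -> z != e -> z \in X.
  by move=> zI; case/setU1P: (subsetP IeX z zI) => [->|]; rewrite ?eqxx.
have [eI | eNI] := boolP (e \in I); last first.
  apply: leq_card_rank => //; apply/subsetP=> z zI.
  by apply: (sub_eX _ zI); apply: contraNneq eNI => <-.
have [xI | xNI] := boolP (x \in I).
  have ex : e = x by apply: (partial_transversalP _ PI).
  apply: leq_card_rank => //; apply/subsetP=> z zI.
  by have [-> | ] := eqVneq z e; [rewrite ex | apply: sub_eX].
have -> : #|I| = #|x |: (I :\ e)|.
  by rewrite cardsU1 in_setD1 (negbTE xNI) andbF (cardsD1 e I) eI.
apply: leq_card_rank.
  apply: partial_transversalU1.
    by apply/partial_transversalP=> a b /setD1P[_ aI] /setD1P[_ bI];
      apply: (partial_transversalP _ PI).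
  move=> a /setD1P[aNe aI]; apply: contra aNe => Rxa; apply/eqP.
  by apply: (partial_transversalP _ PI) => //; rewrite Rsym (Rtrans Rex Rxa).
by apply/subsetP=> z /setU1P[-> // | /setD1P[zNe zI]]; apply: sub_eX.
Qed.

Lemma rank_setU1_unrelated X e :
  {in X, forall x, ~~ R e x} -> rank R X < rank R (e |: X).
Proof.
move=> eX; have [I /andP[PI IX] ->] := rank_witness X.
have eNI : e \notin I.
  by apply: contraT => /negbNE /(subsetP IX) /eX; rewrite Rrefl.
suff : #|e |: I| <= rank R (e |: X) by rewrite cardsU1 eNI.
rewrite leq_card_rank ?setUS //.
by apply: partial_transversalU1 => // a /(subsetP IX)/eX.
Qed.

Lemma closureE X : Defs.closure R X = upper_approx R X.
Proof.
apply/setP=> e; rewrite in_upper_approx inE.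
have [/exists_inP[x xX Rex] | /exists_inPn eX] := boolP [exists x in X, R e x].
  by rewrite (rank_setU1_related xX Rex) eqxx.
by rewrite ltn_eqF ?rank_setU1_unrelated.
Qed.

Lemma lower_approx_sub X : lower_approx R X \subset X.
Proof. by apply/subsetP=> x; rewrite inE => /subsetP; apply; rewrite inE Rrefl. Qed.

Lemma sub_upper_approx X : X \subset upper_approx R X.
Proof.
by apply/subsetP=> x xX; rewrite in_upper_approx; apply/exists_inP; exists x.
Qed.

Lemma upper_approx_fixed_precise X : (upper_approx R X == X) = R_precise R X.
Proof.
rewrite /R_precise; apply/eqP/eqP=> [upX | up_low]; last first.
  by apply/eqP; rewrite eqEsubset sub_upper_approx up_low lower_approx_sub.
apply/eqP; rewrite upX eq_sym eqEsubset lower_approx_sub.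
apply/subsetP=> x xX; rewrite inE; apply/subsetP=> y; rewrite inE => Rxy.
by rewrite -upX in_upper_approx; apply/exists_inP; exists x; rewrite // Rsym.
Qed.

End EquivalenceSupportMatroid.

Theorem corollary5 (T : finType) (R : rel T)
  (hne : 0 < #|T|)
  (Rrefl : reflexive R) (Rsym : symmetric R) (Rtrans : transitive R) :
  forall X : {set T}, ~~ M_closed R X <-> R_rough R X.
Proof.
by move=> X; rewrite /M_closed /R_rough closureE // upper_approx_fixed_precise.
Qed.
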